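(* Let $X$ be a continuous vector field on $\mathbb{S}^1$ of finite width $w(X)$, with support function $\phi_X$. Assume that $\mathbb{D}^2\times\{0\}$ is a support plane of $\mathrm{gr}(\phi_X^-)$ at $(0,0,\phi_X^-(0,0))$, i.e. $\phi_X^-(\eta)\ge0$ for all $\eta\in\mathbb{D}^2$ and $\phi_X^-(0,0)=0$. Then $\phi_X(z)\le2w(X)$ for all $z\in\mathbb{S}^1$.
   Context: $\mathbb{D}^2$ is the open unit disk in $\mathbb{R}^2$, $\mathbb{S}^1$ its boundary. A vector field $X$ on $\mathbb{S}^1$ is written $X(z)=iz\phi_X(z)$ with $\phi_X:\mathbb{S}^1\to\mathbb{R}$ its support function. For $\eta\in\overline{\mathbb{D}^2}$, $\phi_X^-(\eta)=\sup\{a(\eta):a:\mathbb{R}^2\to\mathbb{R}\text{ affine},a|_{\mathbb{S}^1}\le\phi_X\}$, $\phi_X^+(\eta)=\inf\{a(\eta):a\text{ affine},a|_{\mathbb{S}^1}\ge\phi_X\}$. The width is $w(X)=\sup_{\eta\in\mathbb{D}^2}\frac{\phi_X^+(\eta)-\phi_X^-(\eta)}{\sqrt{1-|\eta|^2}}$. *)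

From HB Require Import structures.
From mathcomp Require Import all_boot all_order all_algebra.
From mathcomp Require Import all_classical all_reals all_analysis.
Set Implicit Arguments. Unset Strict Implicit. Unset Printing Implicit Defensive.
Import Order.TTheory GRing.Theory Num.Theory numFieldNormedType.Exports.
Local Open Scope classical_set_scope.
Local Open Scope ring_scope.

Definition S1 (R : realType) : set (R * R) := [set p | p.1 ^+ 2 + p.2 ^+ 2 = 1].
Arguments S1 R : clear implicits.
Definition D2 (R : realType) : set (R * R) := [set p | p.1 ^+ 2 + p.2 ^+ 2 < 1].

Arguments D2 R : clear implicits.

Definition affine_eval (R : realType) (c : R * R * R) (p : R * R) : R :=
  c.1.1 + c.1.2 * p.1 + c.2 * p.2.

Definition phi_minus (R : realType) (phi : R * R -> R) (eta : R * R) : R :=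
  sup [set affine_eval c eta | c in
        [set c : R * R * R | forall z : R * R, S1 R z -> affine_eval c z <= phi z]].

Definition phi_plus (R : realType) (phi : R * R -> R) (eta : R * R) : R :=
  inf [set affine_eval c eta | c in
        [set c : R * R * R | forall z : R * R, S1 R z -> phi z <= affine_eval c z]].

Definition width (R : realType) (phi : R * R -> R) : \bar R :=
  ereal_sup [set ((phi_plus phi eta - phi_minus phi eta)
                   / Num.sqrt (1 - (eta.1 ^+ 2 + eta.2 ^+ 2)))%:E
            | eta in D2 R].

(* An affine function that is nonpositive on the unit circle is nonpositive on
   the closed disk, so every affine majorant b of phi on the circle dominates
   phi^- on the disk; by hypothesis b is then nonnegative on the radius from 0
   to -z.  An affine function nonnegative at -tz for all t in [0, 1) satisfies
   b(z) <= 2 b(0), hence phi(z) <= b(z) <= 2 b(0).  Taking the infimum over b,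
   phi(z) <= 2 phi^+(0) = 2 (phi^+(0) - phi^-(0)) <= 2 w(X). *)

From HB Require Import structures.
From mathcomp Require Import all_boot all_order all_algebra.
From mathcomp Require Import all_classical all_reals all_analysis.
From mathcomp Require Import ring lra.
Import Order.TTheory GRing.Theory Num.Theory numFieldNormedType.Exports.
Local Open Scope classical_set_scope.
Local Open Scope ring_scope.

Set Implicit Arguments. Unset Strict Implicit. Unset Printing Implicit Defensive.

Section AffineFunctions.
Variable R : realType.
Implicit Types (a b c : R * R * R) (p : R * R).

Lemma affine_evalB a b p :
  affine_eval (a - b) p = affine_eval a p - affine_eval b p.
Proof. by rewrite /affine_eval /=; ring. Qed.

Lemma affine_eval_cst (k : R) p : affine_eval (k, 0, 0) p = k.
Proof. by rewrite /affine_eval /= !mul0r !addr0. Qed.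

Lemma affine_eval_segment c p (t : R) :
  affine_eval c (- t * p.1, - t * p.2)
  = affine_eval c (0, 0) - t * (affine_eval c p - affine_eval c (0, 0)).
Proof. by rewrite /affine_eval /=; ring. Qed.

Lemma dot_le_norm_disk (d1 d2 x y : R) :
  x ^+ 2 + y ^+ 2 <= 1 -> d1 * x + d2 * y <= Num.sqrt (d1 ^+ 2 + d2 ^+ 2).
Proof.
move=> xy1; apply: le_trans (ler_norm _) _.
rewrite -sqrtr_sqr ler_wsqrtr //.
have cauchy_schwarz : (d1 * x + d2 * y) ^+ 2
    <= (d1 ^+ 2 + d2 ^+ 2) * (x ^+ 2 + y ^+ 2).
  by have := sqr_ge0 (d1 * y - d2 * x); nra.
apply: le_trans cauchy_schwarz _; rewrite ler_piMr //; nra.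
Qed.

Lemma dot_norm_S1 (d1 d2 : R) :
  exists2 z, S1 R z & d1 * z.1 + d2 * z.2 = Num.sqrt (d1 ^+ 2 + d2 ^+ 2).
Proof.
set r := Num.sqrt _; have r2 : r ^+ 2 = d1 ^+ 2 + d2 ^+ 2 by rewrite sqr_sqrtr; nra.
have [r0 | r_neq0] := eqVneq r 0.
  have [-> ->] : d1 = 0 /\ d2 = 0 by move: r2; rewrite r0; split; nra.
  by exists (1, 0); rewrite /S1 /=; lra.
exists (d1 / r, d2 / r).
  by rewrite /S1 /= !expr_div_n -mulrDl -r2 divff // expf_neq0.
by rewrite /= !mulrA -mulrDl -!expr2 -r2 expr2 mulfK.
Qed.

Lemma affine_le0_disk c p : (forall z, S1 R z -> affine_eval c z <= 0) ->
  p.1 ^+ 2 + p.2 ^+ 2 <= 1 -> affine_eval c p <= 0.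
Proof.
case: c => [[c0 c1] c2] c_le0 p1; rewrite /affine_eval /= -addrA.
have [z Sz dot_z] := dot_norm_S1 c1 c2.
have := c_le0 z Sz; rewrite /affine_eval /= -addrA dot_z => c0r.
by apply: le_trans c0r; rewrite lerD2l dot_le_norm_disk.
Qed.

Lemma affine_le_disk a b p :
  (forall z, S1 R z -> affine_eval a z <= affine_eval b z) ->
  p.1 ^+ 2 + p.2 ^+ 2 <= 1 -> affine_eval a p <= affine_eval b p.
Proof.
move=> ab p1; rewrite -subr_le0 -affine_evalB; apply: affine_le0_disk p1 => z Sz.
by rewrite affine_evalB subr_le0 ab.
Qed.

Lemma nonneg_segment_le (u v : R) :
  (forall t, 0 <= t < 1 -> 0 <= u - t * v) -> v <= u.
Proof.
move=> uv; have u0 : 0 <= u.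
  by have := uv 0; rewrite mul0r subr0; apply; rewrite lexx ltr01.
rewrite leNgt; apply/negP => vu; have v0 : 0 < v by apply: le_lt_trans vu.
(* at t = (u + v) / 2v, which lies in [0, 1), u - t v = (u - v) / 2 < 0 *)
have := uv ((u + v) / (2 * v)).
have -> : (u + v) / (2 * v) * v = (u + v) / 2 by field; rewrite gt_eqF.
rewrite divr_ge0 ?ltr_pdivrMr ?mul1r //=; lra.
Qed.

Lemma affine_le_twice_center c p :
  (forall t, 0 <= t < 1 -> 0 <= affine_eval c (- t * p.1, - t * p.2)) ->
  affine_eval c p <= 2 * affine_eval c (0, 0).
Proof.
move=> c_ge0.
suff : affine_eval c p - affine_eval c (0, 0) <= affine_eval c (0, 0) by lra.
by apply: nonneg_segment_le => t t01; rewrite -affine_eval_segment c_ge0.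
Qed.

End AffineFunctions.

Lemma S1_compact (R : realType) : compact (S1 R).
Proof.
have -> : S1 R = (`[-1, 1] `*` `[-1, 1]) `&` S1 R.
  apply/seteqP; split => [p S1p|p []//]; split => //.
  by rewrite /S1 /= in S1p; split; rewrite /= in_itv /=; apply/andP; split; nra.
apply: compact_closedI; first by apply: compact_setX; exact: segment_compact.
have -> : S1 R = (fun p : R * R => p.1 ^+ 2 + p.2 ^+ 2) @^-1` [set 1] by [].
apply: (proj1 (continuous_closedP _)); last exact: closed_eq.
by move=> p; apply: cvgD; apply: cvgM;
  [exact: cvg_fst | exact: cvg_fst | exact: cvg_snd | exact: cvg_snd].
Qed.

Lemma continuous_S1_bounded (R : realType) (phi : R * R -> R) :
  {within S1 R, continuous phi} -> exists K, forall z, S1 R z -> `|phi z| <= K.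
Proof.
move=> phi_cont.
have [M [_ M_bound]] := compact_bounded (continuous_compact phi_cont (@S1_compact R)).
by exists (M + 1) => z S1z; apply: M_bound; [lra | exists z].
Qed.

Lemma S1_segment_D2 (R : realType) (z : R * R) (t : R) :
  S1 R z -> 0 <= t < 1 -> D2 R (- t * z.1, - t * z.2).
Proof.
rewrite /S1 /D2 /= => z1 /andP[t0 t1].
have -> : (- t * z.1) ^+ 2 + (- t * z.2) ^+ 2 = t ^+ 2 * (z.1 ^+ 2 + z.2 ^+ 2) by ring.
by rewrite z1 mulr1; nra.
Qed.

Definition affine_majorant {R : realType} (phi : R * R -> R) (c : R * R * R) :=
  forall z, S1 R z -> phi z <= affine_eval c z.

Section Envelopes.
Variables (R : realType) (phi : R * R -> R) (K : R).
Hypothesis phi_bounded : forall z, S1 R z -> `|phi z| <= K.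

Lemma phi_minus_le_majorant (c : R * R * R) (p : R * R) : affine_majorant phi c ->
  p.1 ^+ 2 + p.2 ^+ 2 <= 1 -> phi_minus phi p <= affine_eval c p.
Proof.
move=> c_maj p1; apply: ge_sup.
  exists (affine_eval (- K, 0, 0) p), (- K, 0, 0) => // z S1z.
  by rewrite affine_eval_cst lerNl; have /ler_normlP[] := phi_bounded S1z.
move=> _ [a a_min <-]; apply: affine_le_disk p1 => z S1z.
exact: le_trans (a_min z S1z) (c_maj z S1z).
Qed.

Lemma le_phi_plus (x : R) (p : R * R) :
  (forall c, affine_majorant phi c -> x <= affine_eval c p) -> x <= phi_plus phi p.
Proof.
move=> x_le; apply: lb_le_inf; last by move=> _ [c c_maj <-]; exact: x_le.
exists (affine_eval (K, 0, 0) p), (K, 0, 0) => // z S1z.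
by rewrite affine_eval_cst (le_trans (ler_norm _)) ?phi_bounded.
Qed.

Lemma le_twice_phi_plus_center (z : R * R) :
  (forall eta, D2 R eta -> 0 <= phi_minus phi eta) -> S1 R z ->
  phi z <= 2 * phi_plus phi (0, 0).
Proof.
move=> phi_minus_ge0 S1z; rewrite -ler_pdivrMl //; apply: le_phi_plus => c c_maj.
rewrite ler_pdivrMl //; apply: le_trans (c_maj z S1z) (affine_le_twice_center _).
move=> t t01; have D2t := S1_segment_D2 S1z t01.
by apply: le_trans (phi_minus_ge0 _ D2t) (phi_minus_le_majorant c_maj (ltW D2t)).
Qed.

End Envelopes.

Lemma width_ge_center (R : realType) (phi : R * R -> R) :
  ((phi_plus phi (0, 0) - phi_minus phi (0, 0))%:E <= width phi)%E.
Proof.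
apply: ereal_sup_ubound; exists (0, 0); first by rewrite /D2 /= expr0n addr0 ltr01.
by rewrite /= expr0n addr0 subr0 sqrtr1 divr1.
Qed.

Theorem lemma6p4 (R : realType) (phi : R * R -> R) :
  {within S1 R, continuous phi} ->
  (width phi < +oo)%E ->
  (forall eta, D2 R eta -> 0 <= phi_minus phi eta) ->
  phi_minus phi (0, 0) = 0 ->
  forall z, S1 R z -> ((phi z)%:E <= 2%:E * width phi)%E.
Proof.
move=> phi_cont _ phi_minus_ge0 phi_minus0 z S1z.
have [K phi_bounded] := continuous_S1_bounded phi_cont.
have := width_ge_center phi; rewrite phi_minus0 subr0 => phi_plus_le_width.
apply: le_trans (lee_wpmul2l _ phi_plus_le_width); last by rewrite lee_fin.
by rewrite -EFinM lee_fin (le_twice_phi_plus_center phi_bounded).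
Qed.
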